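(* Let $K$ and $L$ be $n$-element finite sets, let $U$ be the real $n^2$-dimensional manifold of unitary matrices $(u_{kl})_{k\in K,l\in L}$, and let $U_0\subset U$ be the open subset of unitary matrices all of whose entries are nonzero. Let $B$ be the real affine space of real matrices $(p_{kl})_{k\in K,l\in L}$ with $\sum_{k}p_{kl}=1$ for all $l$ and $\sum_lp_{kl}=1$ for all $k$, and let $\mu:U\to B$, $\mu((u_{kl}))=(|u_{kl}|^2)$. Then for every $u\in U_0$, the (real) dimension of the kernel of the tangent map $\mu_{*u}:T_uU\to T_{\mu(u)}B$ equals the multiplicity of $1$ in the spectrum of the Berezin transform $I_u$.
   Context: For a finite set $J$, $F(J)$ denotes the space of complex-valued functions on $J$; $M=K\times L$. For $u\in U_0$ the Berezin transform $I_u:F(M)\to F(M)$ is the complex linear operator $(I_uf)_{kl}=\sum_{k'\in K,l'\in L}\frac{u_{kl'}u_{k'l}}{u_{kl}u_{k'l'}}f_{k'l'}|u_{k'l'}|^2$ (equivalently $I_u=C_u^{-1}D_u$, where $C_uf$, $D_uf$ are the operators on $F(K)$ with matrices $\sum_l u_{kl}f_{kl}\bar u_{k'l}$ and $\sum_l u_{kl}f_{k'l}\bar u_{k'l}$); $I_u$ is unitary, hence diagonalizable, and the multiplicity of $1$ is the complex dimension of its $1$-eigenspace. *)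

(* R : realType (the real numbers), C := R[i] (complex numbers,
   from mathcomp-real-closed), matrices indexed by 'I_n (K = L = 'I_n). *)
From HB Require Import structures.
From mathcomp Require Import all_boot all_order all_algebra.
From mathcomp Require Import reals.
From mathcomp Require Import complex.
Set Implicit Arguments. Unset Strict Implicit. Unset Printing Implicit Defensive.
Import Order.TTheory GRing.Theory Num.Theory.
Local Open Scope ring_scope.

Section Defs.
Variable R : realType.
Local Notation C := R[i].
Variable n : nat.

Definition ctrmx (A : 'M[C]_n) : 'M[C]_n := (map_mx (@conjc R) A)^T.

Definition unitary (u : 'M[C]_n) : Prop := ctrmx u *m u = 1%:M.

Definition unitary0 (u : 'M[C]_n) : Prop :=
  unitary u /\ forall k l, u k l != 0.

(* T_u U, as the kernel of the derivative at u of the defining equation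
   u^* u = 1:  A \in T_u U  <->  u^* A + A^* u = 0. *)
Definition tangent_eq (u A : 'M[C]_n) : 'M[C]_n :=
  ctrmx u *m A + ctrmx A *m u.

(* tangent map of mu : (u_kl) |-> (|u_kl|^2 = u_kl * conj u_kl), at u, applied
   to the tangent vector A (values are real, stored in C). *)
Definition dmu (u A : 'M[C]_n) : 'M[C]_n :=
  \matrix_(k, l) (A k l * conjc (u k l) + u k l * conjc (A k l)).

Definition realify (A : 'M[C]_n) : 'rV[R]_(n * n + n * n) :=
  row_mx (mxvec (map_mx (@complex.Re R) A)) (mxvec (map_mx (@complex.Im R) A)).
Definition complexify (v : 'rV[R]_(n * n + n * n)) : 'M[C]_n :=
  \matrix_(k, l) Complex (vec_mx (lsubmx v) k l) (vec_mx (rsubmx v) k l).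

(* real-linear map whose kernel is ker (mu_{*u} : T_u U -> T_{mu u} B) *)
Definition kerdmu_map (u : 'M[C]_n) (v : 'rV[R]_(n * n + n * n)) :=
  row_mx (realify (tangent_eq u (complexify v))) (realify (dmu u (complexify v))).

Definition dim_ker_dmu (u : 'M[C]_n) : nat :=
  \rank (kermx (lin1_mx (kerdmu_map u))).

(* Berezin transform I_u on F(M) = 'M[C]_n;  |z|^2 written as z * conj z *)
Definition berezin (u f : 'M[C]_n) : 'M[C]_n :=
  \matrix_(k, l) \sum_(k' < n) \sum_(l' < n)
     (u k l' * u k' l / (u k l * u k' l')) * f k' l' * (u k' l' * conjc (u k' l')).

Definition mult1_berezin (u : 'M[C]_n) : nat :=
  \rank (eigenspace (lin_mx (berezin u)) 1).

End Defs.

(* Write u∘F for the entrywise product.  The Berezin transform is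
   I_u F = (u (ū∘F)^T u) / u entrywise, so for u in U_0 the fixed points of I_u
   are the zeros of D F := u^* (u∘F) - (ū∘F)^T u.  The kernel of dμ at u consists
   of the A with every A_kl / u_kl purely imaginary, i.e. A = i u∘g with g real,
   and for these the tangency condition u^* A + A^* u = 0 reads i D g = 0.  So
   ker μ_* is isomorphic to the real space {g : D g = 0}.  For real g the matrix
   D g is skew-Hermitian, hence D (a + i b) = 0 iff D a = D b = 0: the complex
   1-eigenspace of I_u is the complexification of that real space. *)

From HB Require Import structures.
From mathcomp Require Import all_boot all_order all_algebra.
From mathcomp Require Import reals complex ring.
Set Implicit Arguments. Unset Strict Implicit. Unset Printing Implicit Defensive.
Import Order.TTheory GRing.Theory Num.Theory.
Local Open Scope ring_scope.


Lemma mul_rV_lin1_fun (F : fieldType) m p (f : 'rV[F]_m -> 'rV[F]_p) :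
  linear f -> forall x, x *m lin1_mx f = f x.
Proof.
move=> f_lin; exact: (mul_rV_lin1 (HB.pack f (GRing.isLinear.Build _ _ _ _ f f_lin))).
Qed.

Lemma mul_rV_lin_fun (F : fieldType) m1 n1 m2 n2 (f : 'M[F]_(m1, n1) -> 'M[F]_(m2, n2)) :
  linear f -> forall x, x *m lin_mx f = mxvec (f (vec_mx x)).
Proof.
move=> f_lin; exact: (mul_rV_lin (HB.pack f (GRing.isLinear.Build _ _ _ _ f f_lin))).
Qed.

Lemma eq_mxrank_kermx (F : fieldType) m p q (A : 'M[F]_(m, p)) (B : 'M[F]_(m, q)) :
  (forall x : 'rV_m, x *m A = 0 <-> x *m B = 0) -> \rank (kermx A) = \rank (kermx B).
Proof.
have sub_ker p' q' (A' : 'M[F]_(m, p')) (B' : 'M[F]_(m, q')) :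
    (forall x : 'rV_m, x *m A' = 0 -> x *m B' = 0) -> (kermx A' <= kermx B')%MS.
  move=> AB; apply/sub_kermxP/row_matrixP => i.
  by rewrite row_mul row0 AB // -row_mul mulmx_ker row0.
by move=> AB; apply/eqP; rewrite eqn_leq !mxrankS // sub_ker // => x /AB.
Qed.

Lemma mxrank_kermx_mulfree (F : fieldType) m p q (P : 'M[F]_(m, p)) (A : 'M[F]_(p, q)) :
  row_free P -> (kermx A <= P)%MS -> \rank (kermx (P *m A)) = \rank (kermx A).
Proof.
move=> P_free kerA_P; apply/eqP; rewrite eqn_leq; apply/andP; split.
  rewrite -(mxrankMfree _ P_free) mxrankS //.
  by apply/sub_kermxP; rewrite -mulmxA mulmx_ker.
rewrite -{1}(mulmxKpV kerA_P); apply: leq_trans (mxrankM_maxl _ _) (mxrankS _).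
by apply/sub_kermxP; rewrite mulmxA (mulmxKpV kerA_P) mulmx_ker.
Qed.

Lemma mxrank_kermx_map (F F' : fieldType) (f : {rmorphism F -> F'}) m p
    (A : 'M[F]_(m, p)) :
  \rank (kermx (map_mx f A)) = \rank (kermx A).
Proof. by rewrite !mxrank_ker mxrank_map. Qed.

Section ComplexNumbers.
Variable R : rcfType.
Local Notation C := R[i].
Local Notation toC := (map_mx (real_complex R)).

Lemma conjc_i : ('i%C : C)^*%C = - 'i%C.
Proof. by apply/eqP; rewrite eq_complex /= oppr0 !eqxx. Qed.

(* Unlike [rmorphM]/[rmorphD], these leave the bare [conjc] in the goal, so that
   [conjc_i] and [conjc_real] can rewrite afterwards. *)
Lemma conjcM (x y : C) : (x * y)^*%C = x^*%C * y^*%C.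
Proof. exact: rmorphM. Qed.

Lemma conjcD (x y : C) : (x + y)^*%C = x^*%C + y^*%C.
Proof. exact: rmorphD. Qed.

Lemma i_neq0 : ('i%C : C) != 0.
Proof. by rewrite eq_complex /= oner_eq0 andbF. Qed.

Lemma imaginaryE (w : C) : w + w^*%C = 0 -> w = 'i%C * (complex.Im w)%:C%C.
Proof.
move=> w_imag; have Rew : complex.Re w = 0.
  by apply: (@complexI R); rewrite ReJ_add w_imag mul0r.
by rewrite [LHS]complexE Rew add0r.
Qed.

Lemma toC_addi_eq0 a b (P Q : 'M[R]_(a, b)) :
  toC P + 'i%C *: toC Q = 0 <-> P = 0 /\ Q = 0.
Proof.
split=> [/matrixP PQ0|[-> ->]]; last by rewrite map_mx0 scaler0 addr0.
by split; apply/matrixP => i j; have /eqP := PQ0 i j;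
  rewrite !mxE eq_complex /=; simpc => /andP[/eqP ? /eqP ?].
Qed.

Lemma toC_ReIm a b (A : 'M[C]_(a, b)) :
  toC (map_mx (@complex.Re R) A) + 'i%C *: toC (map_mx (@complex.Im R) A) = A.
Proof. by apply/matrixP => i j; rewrite !mxE [RHS]complexE mulrC. Qed.

Lemma mulmx_toC_eq0 m p (x : 'rV[C]_m) (Q : 'M[R]_(m, p)) :
  x *m toC Q = 0 <->
  map_mx (@complex.Re R) x *m Q = 0 /\ map_mx (@complex.Im R) x *m Q = 0.
Proof. by rewrite -toC_addi_eq0 !map_mxM scalemxAl -mulmxDl toC_ReIm. Qed.

End ComplexNumbers.

Section ComplexSquareMatrices.
Variable R : realType.
Local Notation C := R[i].
Variable n : nat.
Implicit Types A B X Y : 'M[C]_n.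

Lemma ctrmxK : involutive (@ctrmx R n).
Proof. by move=> A; apply/matrixP => i j; rewrite !mxE conjcK. Qed.

Lemma ctrmxM A B : ctrmx (A *m B) = ctrmx B *m ctrmx A.
Proof. by rewrite /ctrmx map_mxM trmx_mul. Qed.

Lemma ctrmxD : {morph @ctrmx R n : A B / A + B}.
Proof. by move=> A B; apply/matrixP => i j; rewrite !mxE rmorphD. Qed.

Lemma ctrmxB A B : ctrmx (A - B) = ctrmx A - ctrmx B.
Proof. by apply/matrixP => i j; rewrite !mxE rmorphB. Qed.

Lemma ctrmxZ (c : C) A : ctrmx (c *: A) = c^*%C *: ctrmx A.
Proof. by apply/matrixP => i j; rewrite !mxE rmorphM. Qed.

Lemma skew_hermitian_addi_eq0 X Y :
  ctrmx X = - X -> ctrmx Y = - Y -> X + 'i%C *: Y = 0 -> X = 0 /\ Y = 0.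
Proof.
move=> skX skY XY0.
have := congr1 (@ctrmx R n) XY0.
rewrite ctrmxD ctrmxZ skX skY conjc_i /ctrmx map_mx0 trmx0 => XY0'.
have : ('i%C *: Y) *+ 2 = 0.
  rewrite -[RHS](addr0 0) -{1}XY0 -{}XY0' scaleNr scalerN opprK.
  by rewrite addrACA subrr add0r mulr2n.
rewrite -scaler_nat => /eqP.
rewrite !scaler_eq0 pnatr_eq0 (negbTE (i_neq0 R)) /= => /eqP Y0.
by move: XY0; rewrite Y0 scaler0 addr0.
Qed.

Lemma realifyK : cancel (@realify R n) (@complexify R n).
Proof.
move=> A; apply/matrixP => k l.
by rewrite mxE /realify row_mxKl row_mxKr !mxvecK !mxE; case: (A k l).
Qed.

Lemma complexifyK : cancel (@complexify R n) (@realify R n).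
Proof.
move=> v; rewrite /realify -[v in RHS]hsubmxK; congr row_mx.
  by rewrite -[lsubmx v]vec_mxK; congr mxvec; apply/matrixP => k l; rewrite !mxE.
by rewrite -[rsubmx v]vec_mxK; congr mxvec; apply/matrixP => k l; rewrite !mxE.
Qed.

Lemma realify_inj : injective (@realify R n).
Proof. exact: can_inj realifyK. Qed.

Lemma realify0 : realify (0 : 'M[C]_n) = 0.
Proof. by rewrite /realify !map_mx0 !linear0 row_mx0. Qed.

Lemma realifyP (a : R) X Y : realify (a%:C%C *: X + Y) = a *: realify X + realify Y.
Proof.
rewrite /realify scale_row_mx add_row_mx -!linearZ -!linearD /=.
by congr (row_mx (mxvec _) (mxvec _)); apply/matrixP => k l; rewrite !mxE;
  case: (X k l) => ? ?; case: (Y k l) => ? ? /=; simpc.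
Qed.

Lemma complexifyP (a : R) (v w : 'rV[R]_(n * n + n * n)) :
  complexify (a *: v + w) = a%:C%C *: complexify v + complexify w.
Proof.
by apply/matrixP => k l; rewrite [LHS]mxE !linearP /= !mxE; simpc.
Qed.

End ComplexSquareMatrices.

Section BerezinKernel.
Variable R : realType.
Local Notation C := R[i].
Local Notation toC := (map_mx (real_complex R)).
Variable n : nat.
Variable u : 'M[C]_n.
Implicit Types (F : 'M[C]_n) (g : 'M[R]_n).

Definition uprod F : 'M[C]_n := \matrix_(k, l) (u k l * F k l).
Definition uconjT F : 'M[C]_n := \matrix_(l, k) ((u k l)^*%C * F k l).
Definition berezin_defect F := ctrmx u *m uprod F - uconjT F *m u.

Lemma berezin_linear : linear (berezin u).
Proof.
move=> c F1 F2; apply/matrixP => k l; rewrite !mxE mulr_sumr -big_split.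
apply: eq_bigr => k' _; rewrite mulr_sumr -big_split; apply: eq_bigr => l' _.
by rewrite !mxE /=; ring.
Qed.

Lemma berezin_defect_linear : linear berezin_defect.
Proof.
move=> c F1 F2; rewrite /berezin_defect.
have -> : uprod (c *: F1 + F2) = c *: uprod F1 + uprod F2.
  by apply/matrixP => k l; rewrite !mxE; ring.
have -> : uconjT (c *: F1 + F2) = c *: uconjT F1 + uconjT F2.
  by apply/matrixP => k l; rewrite !mxE; ring.
rewrite mulmxDr mulmxDl -scalemxAr -scalemxAl.
by rewrite scalerBr opprD addrACA.
Qed.

Lemma ctrmx_uprod g : ctrmx (uprod (toC g)) = uconjT (toC g).
Proof. by apply/matrixP => l k; rewrite !mxE conjcM conjc_real. Qed.

Lemma berezin_defect_skew g :
  ctrmx (berezin_defect (toC g)) = - berezin_defect (toC g).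
Proof.
rewrite /berezin_defect ctrmxB !ctrmxM ctrmxK ctrmx_uprod -ctrmx_uprod ctrmxK.
by rewrite opprB.
Qed.

Lemma berezin_defect_split a b :
  berezin_defect (toC a + 'i%C *: toC b) = 0 <->
  berezin_defect (toC a) = 0 /\ berezin_defect (toC b) = 0.
Proof.
rewrite addrC berezin_defect_linear addrC.
split=> [|[-> ->]]; last by rewrite scaler0 addr0.
exact: skew_hermitian_addi_eq0 (berezin_defect_skew a) (berezin_defect_skew b).
Qed.

Definition iuprod g := 'i%C *: uprod (toC g).

Lemma dmu_iuprod g : dmu u (iuprod g) = 0.
Proof. by apply/matrixP => k l; rewrite !mxE !conjcM conjc_i conjc_real; ring. Qed.

Lemma tangent_eq_iuprod g : tangent_eq u (iuprod g) = 'i%C *: berezin_defect (toC g).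
Proof.
rewrite /tangent_eq /iuprod ctrmxZ ctrmx_uprod conjc_i /berezin_defect.
by rewrite -scalemxAr -scalemxAl scaleNr scalerBr.
Qed.

Lemma iuprodP (a : R) g1 g2 : iuprod (a *: g1 + g2) = a%:C%C *: iuprod g1 + iuprod g2.
Proof. by apply/matrixP => k l; rewrite !mxE rmorphD rmorphM /=; ring. Qed.

Definition iuprod_rV (x : 'rV[R]_(n * n)) := realify (iuprod (vec_mx x)).

Lemma iuprod_rV_linear : linear iuprod_rV.
Proof. by move=> a x y; rewrite /iuprod_rV linearP iuprodP realifyP. Qed.

Lemma tangent_eqP (a : R) A B :
  tangent_eq u (a%:C%C *: A + B) = a%:C%C *: tangent_eq u A + tangent_eq u B.
Proof.
rewrite /tangent_eq ctrmxD ctrmxZ conjc_real mulmxDr mulmxDl -scalemxAr -scalemxAl.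
by rewrite scalerDr addrACA.
Qed.

Lemma dmuP (a : R) A B : dmu u (a%:C%C *: A + B) = a%:C%C *: dmu u A + dmu u B.
Proof. by apply/matrixP => k l; rewrite !mxE conjcD conjcM conjc_real; ring. Qed.

Lemma kerdmu_map_linear : linear (kerdmu_map u).
Proof.
move=> a v w; rewrite /kerdmu_map scale_row_mx add_row_mx.
by rewrite complexifyP tangent_eqP dmuP !realifyP.
Qed.

Lemma kerdmu_map_eq0 v :
  kerdmu_map u v = 0 <-> tangent_eq u (complexify v) = 0 /\ dmu u (complexify v) = 0.
Proof.
rewrite /kerdmu_map -row_mx0 -realify0.
by split=> [/eq_row_mx[/realify_inj-> /realify_inj->] | [-> ->]].
Qed.

Definition iuprod_mx := lin1_mx iuprod_rV.

Hypothesis u_unitary : unitary u.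
Hypothesis u_neq0 : forall k l, u k l != 0.

Lemma berezinE F k l : berezin u F k l = (u *m uconjT F *m u) k l / u k l.
Proof.
rewrite !mxE mulr_suml; apply: eq_bigr => k' _; rewrite !mxE !mulr_suml.
apply: eq_bigr => l' _; rewrite !mxE.
have := u_neq0 k l; have := u_neq0 k' l'.
by move: (u k l) (u k' l') => a b a0 b0; field; apply/andP.
Qed.

Lemma berezin_fixed_uprod F : berezin u F = F <-> u *m uconjT F *m u = uprod F.
Proof.
split=> [fixF|uTu].
  apply/matrixP => k l; have := congr1 (fun M : 'M[C]_n => M k l) fixF.
  by rewrite [X in _ -> _ = X]mxE berezinE => <-; rewrite mulrC divfK.
by apply/matrixP => k l; rewrite berezinE uTu mxE mulrC mulKf.
Qed.

Lemma berezin_fixedP F : berezin u F = F <-> berezin_defect F = 0.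
Proof.
rewrite berezin_fixed_uprod /berezin_defect.
split=> [<-|/eqP]; first by rewrite !mulmxA u_unitary mul1mx subrr.
rewrite subr_eq0 => /eqP Tu.
by rewrite -mulmxA -Tu mulmxA (mulmx1C u_unitary) mul1mx.
Qed.

Lemma dmu_eq0 A : dmu u A = 0 -> exists g, A = iuprod g.
Proof.
move=> /matrixP dmuA0; exists (\matrix_(k, l) complex.Im (A k l / u k l)).
apply/matrixP => k l; rewrite !mxE /=.
have u0 := u_neq0 k l; have u0' : (u k l)^*%C != 0 by rewrite conjc_eq0.
have w_imag : A k l / u k l + (A k l / u k l)^*%C = 0.
  have := dmuA0 k l; rewrite !mxE conjcM conjc_inv => dmu0.
  apply: (mulIf (mulf_neq0 u0 u0')); rewrite mul0r -dmu0; field; exact/andP.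
by rewrite -{1}(divfK u0 (A k l)) {1}(imaginaryE w_imag); ring.
Qed.

Lemma iuprod_eq0 g : iuprod g = 0 -> g = 0.
Proof.
move=> /matrixP ig0; apply/matrixP => k l; have /eqP := ig0 k l.
rewrite !mxE !mulf_eq0 (negbTE (i_neq0 R)) (negbTE (u_neq0 k l)) /=.
by rewrite eq_complex /= eqxx andbT => /eqP.
Qed.

Lemma row_free_iuprod_mx : row_free iuprod_mx.
Proof.
apply/inj_row_free => x; rewrite (mul_rV_lin1_fun iuprod_rV_linear) /iuprod_rV.
rewrite -realify0 => /realify_inj/iuprod_eq0 x0.
by rewrite -(vec_mxK x) x0 raddf0.
Qed.

Lemma kermx_kerdmu_sub : (kermx (lin1_mx (kerdmu_map u)) <= iuprod_mx)%MS.
Proof.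
apply/row_subP => i; set y := row i _.
have : y *m lin1_mx (kerdmu_map u) = 0 by rewrite -row_mul mulmx_ker row0.
rewrite (mul_rV_lin1_fun kerdmu_map_linear) => /kerdmu_map_eq0[_ /dmu_eq0[g yE]].
apply/submxP; exists (mxvec g).
rewrite (mul_rV_lin1_fun iuprod_rV_linear) /iuprod_rV mxvecK.
by rewrite -yE complexifyK.
Qed.

Lemma mulmx_iuprod_kerdmu_eq0 x :
  x *m (iuprod_mx *m lin1_mx (kerdmu_map u)) = 0 <-> berezin_defect (toC (vec_mx x)) = 0.
Proof.
rewrite mulmxA !(mul_rV_lin1_fun iuprod_rV_linear) (mul_rV_lin1_fun kerdmu_map_linear).
rewrite kerdmu_map_eq0 /iuprod_rV realifyK tangent_eq_iuprod dmu_iuprod.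
split=> [[/eqP] | ->]; last by rewrite scaler0.
by rewrite scaler_eq0 (negbTE (i_neq0 R)) => /eqP.
Qed.

Lemma mulmx_berezin_sub1_eq0 (x : 'rV[C]_(n * n)) :
  x *m (lin_mx (berezin u) - 1%:M) = 0 <-> berezin_defect (vec_mx x) = 0.
Proof.
rewrite mulmxBr mulmx1 (mul_rV_lin_fun berezin_linear) -berezin_fixedP.
split=> [/eqP|->]; last by rewrite vec_mxK subrr.
by rewrite subr_eq0 => /eqP/(congr1 vec_mx); rewrite mxvecK.
Qed.

End BerezinKernel.

Theorem theorem5p1 (R : realType) (n : nat) (u : 'M[R[i]]_n) :
  unitary0 u -> dim_ker_dmu u = mult1_berezin u.
Proof.
case=> u_unitary u_neq0.
rewrite /dim_ker_dmu -(mxrank_kermx_mulfree (row_free_iuprod_mx u_neq0)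
  (kermx_kerdmu_sub u_neq0)).
rewrite -(mxrank_kermx_map (real_complex R)) /mult1_berezin /eigenspace.
apply: eq_mxrank_kermx => x.
rewrite (mulmx_berezin_sub1_eq0 u_unitary u_neq0) mulmx_toC_eq0.
by rewrite !mulmx_iuprod_kerdmu_eq0 -!map_vec_mx -berezin_defect_split toC_ReIm.
Qed.
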